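(* Let $U$ be a rise function that is three times continuously differentiable on $[0,1]$. (i) If $U''(\phi)\le0$ and $U'''(\phi)\le 2\,U''(\phi)^2/U'(\phi)$ for all $\phi\in[0,1]$, then $U$ is icpd. (ii) If $U''(\phi)\ge0$ and $U'''(\phi)\ge 2\,U''(\phi)^2/U'(\phi)$ for all $\phi\in[0,1]$, then $U$ is dcpd. More generally, $U$ is icpd if $U'''(\phi)\le 3\frac{U''(\phi)^2}{U'(\phi)}-\frac{U''(\psi)U''(\phi)U'(\phi)}{U'(\psi)^2}$ for all $0\le\psi\le\phi\le1$, and dcpd if the reverse inequality holds for all $0\le\psi\le\phi\le1$.
   Context: A rise function is a smooth $U:[0,\infty)\to[0,\infty)$ with $U'>0$, $U(0)=0$, $U(1)=1$. $H_\varepsilon(\phi)=U^{-1}(U(\phi)+\varepsilon)$ and $\Delta H(\phi,\Delta\phi,\varepsilon)=H_\varepsilon(\phi+\Delta\phi)-H_\varepsilon(\phi)$ on $\mathcal{D}=\{(\phi,\Delta\phi,\varepsilon):0\le\varepsilon\le1,\ 0\le\phi\le1,\ 0\le\Delta\phi\le U^{-1}(1-\varepsilon)-\phi\}$. $U$ is icpd (increasing the change of phase differences) if $\partial_\phi\Delta H\ge0$ on $\mathcal{D}$, and dcpd (decreasing the change of phase differences) if $\partial_\phi\Delta H\le0$ on $\mathcal{D}$. *)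

From Stdlib Require Import Reals Lra ClassicalEpsilon.
Open Scope R_scope.

Definition nonneg (x : R) : Prop := 0 <= x.
Definition unit_interval (x : R) : Prop := 0 <= x <= 1.

(* Smooth (C^oo) on [0,+oo): a tower of derivatives, each taken within
   [0,+oo) (one-sided at the endpoint 0), via Stdlib's D_in. *)
Definition smooth_nonneg (U : R -> R) : Prop :=
  exists Df : nat -> R -> R,
    (forall x, 0 <= x -> Df O x = U x) /\
    (forall n x, 0 <= x -> D_in (Df n) (Df (S n)) nonneg x).

Definition rise_function (U : R -> R) : Prop :=
  smooth_nonneg U /\
  (forall x, 0 <= x -> 0 <= U x) /\
  (forall (d : R -> R) x, 0 <= x -> D_in U d nonneg x -> 0 < d x) /\
  U 0 = 0 /\ U 1 = 1.

Definition Uinv (U : R -> R) (y : R) : R :=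
  epsilon (inhabits 0) (fun x => 0 <= x /\ U x = y).

Definition Heps (U : R -> R) (eps phi : R) : R := Uinv U (U phi + eps).

Definition DeltaH (U : R -> R) (phi dphi eps : R) : R :=
  Heps U eps (phi + dphi) - Heps U eps phi.

Definition inD (U : R -> R) (phi dphi eps : R) : Prop :=
  0 <= eps <= 1 /\ 0 <= phi <= 1 /\ 0 <= dphi <= Uinv U (1 - eps) - phi.

(* Partial derivative in phi taken within the phi-slice of D. *)
Definition icpd (U : R -> R) : Prop :=
  forall phi dphi eps, inD U phi dphi eps ->
    exists l, D_in (fun p => DeltaH U p dphi eps) (fun _ => l)
                   (fun p => inD U p dphi eps) phi /\ 0 <= l.

Definition dcpd (U : R -> R) : Prop :=
  forall phi dphi eps, inD U phi dphi eps ->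
    exists l, D_in (fun p => DeltaH U p dphi eps) (fun _ => l)
                   (fun p => inD U p dphi eps) phi /\ l <= 0.

Definition C3_on_unit (U U1 U2 U3 : R -> R) : Prop :=
  forall x, 0 <= x <= 1 ->
    D_in U U1 unit_interval x /\ D_in U1 U2 unit_interval x /\
    D_in U2 U3 unit_interval x /\ limit1_in U3 unit_interval (U3 x) x.

From Pilot Require Import Defs.
From Stdlib Require Import Reals Lra ClassicalEpsilon Ranalysis5.
Open Scope R_scope.

(* Write U' = U1, U'' = U2, U''' = U3 and kappa = U'' / U'^2, so that
   kappa' = (U''' - 2 U''^2 / U') / U'^2.  Each hypothesis of the theorem
   makes kappa monotone on [0, 1]: directly for (i) and (ii), and for the general criteria by taking
   psi = phi, where the bound becomes 2 U''^2 / U'.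
   Writing H = H_eps, the inverse function rule gives H'(q) = U'(q) / U'(H q),
   hence the phi-derivative of Delta H is G (phi + dphi) - G phi with
     G q = U'(q) / U'(H q),   G'(q) = U'(q)^2 / U'(H q) * (kappa q - kappa (H q)).
   As q <= H q, a nonincreasing kappa makes G nondecreasing (icpd), and a
   nondecreasing kappa makes G nonincreasing (dcpd); both cases are treated
   at once by multiplying kappa and G by a sign sg. *)

Lemma D_in_fun_ext f g d D x :
  (forall y, D y -> f y = g y) -> f x = g x -> D_in f d D x -> D_in g d D x.
Proof.
  unfold D_in, limit1_in, limit_in; intros Efg Ex H eps Heps.
  destruct (H eps Heps) as [alp [Halp Hlim]]; exists alp; split; [exact Halp|].
  intros y [[Dy Ny] Hy]. rewrite <- (Efg y Dy), <- Ex. apply Hlim.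
  split; [split|]; assumption.
Qed.

Lemma D_in_of_derivable_pt_lim f l D x :
  derivable_pt_lim f x l -> D_in f (fun _ => l) D x.
Proof.
  intro H. apply (D_in_imp _ _ no_cond); [intros; exact I|].
  apply derivable_pt_lim_D_in; exact H.
Qed.

Lemma D_in_Rinv f d D x : D_in f d D x -> f x <> 0 ->
  D_in (fun z => / f z) (fun z => - d z / (f z * f z)) D x.
Proof.
  intros Hf Hx.
  assert (Hinv : D_in Rinv (fun z => - / (z * z)) (fun _ => True) (f x)).
  { apply (D_in_fun_ext (div_fct (fct_cte 1) id)).
    - intros; unfold div_fct, fct_cte, id, Rdiv; ring.
    - unfold div_fct, fct_cte, id, Rdiv; ring.
    - apply (D_in_ext (fun _ => (0 * id (f x) - fct_cte 1 (f x) * 1) / Rsqr (id (f x)))).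
      + unfold fct_cte, id, Rsqr. field; exact Hx.
      + apply D_in_of_derivable_pt_lim, derivable_pt_lim_div;
          [apply derivable_pt_lim_const | apply derivable_pt_lim_id | exact Hx]. }
  apply (D_in_imp _ _ (Dgf D (fun _ => True) f)); [intros; split; auto|].
  apply (D_in_ext (fun z => d z * - / (f z * f z))); [unfold Rdiv; ring|].
  exact (Dcomp _ _ _ _ _ _ x Hf Hinv).
Qed.

(* To apply the two-sided mean value theorem of the standard library to a
   function known only on [a, b], we compose it with the projection onto [a, b]. *)
Definition clamp a b x := Rmax a (Rmin x b).

Lemma clamp_in a b x : a <= b -> a <= clamp a b x <= b.
Proof. unfold clamp, Rmax, Rmin; intros; repeat destruct Rle_dec; lra. Qed.

Lemma clamp_id a b x : a <= x <= b -> clamp a b x = x.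
Proof. unfold clamp, Rmax, Rmin; intros; repeat destruct Rle_dec; lra. Qed.

Lemma clamp_dist a b x c : a <= c <= b -> Rabs (clamp a b x - c) <= Rabs (x - c).
Proof.
  unfold clamp, Rmax, Rmin; intros; repeat destruct Rle_dec;
    unfold Rabs; repeat destruct Rcase_abs; lra.
Qed.

Lemma clamp_continuity f a b c : a <= b -> a <= c <= b ->
  continue_in f (fun z => a <= z <= b) c -> continuity_pt (fun x => f (clamp a b x)) c.
Proof.
  intros Hab Hc H. unfold continuity_pt, continue_in, limit1_in, limit_in in *.
  intros eps Heps. destruct (H eps Heps) as [alp [Halp Hlim]].
  exists alp; split; [exact Halp|].
  intros x [_ Hx]. simpl in *. unfold Rdist in *. rewrite (clamp_id a b c Hc).
  destruct (Req_dec (clamp a b x) c) as [E|E].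
  - rewrite E, Rminus_diag, Rabs_R0; exact Heps.
  - apply Hlim. split; [split; [apply clamp_in; exact Hab | auto]|].
    pose proof (clamp_dist a b x c Hc); lra.
Qed.

Lemma clamp_derivable f d a b c : a < c < b ->
  D_in f d (fun z => a <= z <= b) c ->
  derivable_pt_lim (fun x => f (clamp a b x)) c (d c).
Proof.
  intros Hc H. unfold D_in, limit1_in, limit_in, derivable_pt_lim in *.
  intros eps Heps. destruct (H eps Heps) as [alp [Halp Hlim]].
  set (del := Rmin alp (Rmin (c - a) (b - c))).
  assert (Hdel : 0 < del /\ del <= alp /\ del <= c - a /\ del <= b - c).
  { unfold del, Rmin; repeat destruct Rle_dec; lra. }
  exists (mkposreal del (proj1 Hdel)). intros h Hh0 Hh. simpl in *.
  apply Rabs_def2 in Hh.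
  rewrite (clamp_id a b (c + h)), (clamp_id a b c) by lra.
  replace h with ((c + h) - c) at 2 by ring.
  apply Hlim. unfold Rdist. replace (c + h - c) with h by ring.
  split; [split; [lra | intro E; apply Hh0; lra]|].
  apply Rabs_def1; lra.
Qed.

Lemma D_in_MVT f d a b : a < b ->
  (forall t, a <= t <= b -> D_in f d (fun z => a <= z <= b) t) ->
  exists c, a < c < b /\ f b - f a = d c * (b - a).
Proof.
  intros Hab H.
  set (fc := fun x => f (clamp a b x)).
  assert (pr1 : forall c, a < c < b -> derivable_pt fc c).
  { intros c Hc. exists (d c). apply clamp_derivable; [exact Hc|]. apply H; lra. }
  assert (pr2 : forall c, a < c < b -> derivable_pt id c).
  { intros; apply derivable_pt_id. }
  destruct (MVT fc id a b pr1 pr2 Hab) as [c [Hc Ec]].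
  - intros c Hc. apply clamp_continuity; [lra | exact Hc|].
    eapply cont_deriv; apply H; exact Hc.
  - intros c _. apply derivable_continuous_pt, derivable_pt_id.
  - exists c; split; [exact Hc|].
    rewrite (derive_pt_eq_0 fc c (d c) (pr1 c Hc)) in Ec
      by (apply clamp_derivable; [exact Hc | apply H; lra]).
    rewrite (derive_pt_eq_0 id c 1 (pr2 c Hc) (derivable_pt_lim_id c)) in Ec.
    unfold fc, id in Ec. rewrite (clamp_id a b a), (clamp_id a b b) in Ec by lra.
    lra.
Qed.

Lemma D_in_nondecreasing f d a b : a <= b ->
  (forall t, a <= t <= b -> D_in f d (fun z => a <= z <= b) t) ->
  (forall t, a <= t <= b -> 0 <= d t) -> f a <= f b.
Proof.
  intros Hab H Hd. destruct (Req_dec a b) as [E|E]; [subst; lra|].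
  destruct (D_in_MVT f d a b) as [c [Hc Ec]]; [lra | exact H|].
  assert (0 <= d c * (b - a)) by (apply Rmult_le_pos; [apply Hd; lra | lra]).
  lra.
Qed.

Lemma limit1_in_ext f g D D' l x : limit1_in f D l x ->
  (forall z, D' z -> D z /\ f z = g z) -> limit1_in g D' l x.
Proof.
  unfold limit1_in, limit_in; intros H E eps Heps.
  destruct (H eps Heps) as [alp [Halp Hlim]]; exists alp; split; [exact Halp|].
  intros z [Dz Hz]. destruct (E z Dz) as [Dz' Ez]. rewrite <- Ez. apply Hlim; auto.
Qed.

(* Every point of [0, 1] is a limit of other points of [0, 1], so derivatives
   within [0, 1] are unique. *)
Lemma unit_interval_adherent x : 0 <= x <= 1 -> adhDa (D_x unit_interval x) x.
Proof.
  intros Hx alp Halp. unfold D_x, unit_interval, Rdist.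
  set (h := Rmin (alp / 2) (1 / 2)).
  assert (Hh : 0 < h /\ h <= alp / 2 /\ h <= 1 / 2) by (unfold h, Rmin; destruct Rle_dec; lra).
  destruct (Rle_dec x (1 / 2)).
  - exists (x + h). rewrite Rabs_right by lra. repeat split; lra.
  - exists (x - h). rewrite Rabs_left by lra. repeat split; lra.
Qed.

Section RiseFunction.

Variable U : R -> R.
Hypothesis HU : rise_function U.

Lemma rise_derivative : exists dU : R -> R,
  forall x, 0 <= x -> D_in U dU Defs.nonneg x /\ 0 < dU x.
Proof.
  destruct HU as [[Df [HDf0 HDf]] [_ [Hpos _]]].
  exists (Df 1%nat). intros x Hx.
  assert (H : D_in U (Df 1%nat) Defs.nonneg x).
  { apply (D_in_fun_ext (Df 0%nat)); auto. }
  split; [exact H | exact (Hpos _ x Hx H)].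
Qed.

Lemma rise_increasing a b : 0 <= a -> a < b -> U a < U b.
Proof.
  intros Ha Hab. destruct rise_derivative as [dU HdU].
  destruct (D_in_MVT U dU a b Hab) as [c [Hc Ec]].
  { intros t Ht. apply (D_in_imp _ _ Defs.nonneg); [unfold Defs.nonneg; intros; lra|].
    apply HdU; lra. }
  assert (0 < dU c) by (apply HdU; lra).
  assert (0 < dU c * (b - a)) by (apply Rmult_lt_0_compat; lra).
  lra.
Qed.

Lemma rise_le a b : 0 <= a -> a <= b -> U a <= U b.
Proof.
  intros Ha Hab. destruct (Req_dec a b) as [->|E]; [lra|].
  left; apply rise_increasing; lra.
Qed.

Lemma rise_le_inv a b : 0 <= a -> 0 <= b -> U a <= U b -> a <= b.
Proof.
  intros Ha Hb H. destruct (Rle_dec a b) as [|Hba]; [assumption|].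
  assert (U b < U a) by (apply rise_increasing; lra). lra.
Qed.

Variables U1 U2 U3 : R -> R.
Hypothesis HC : C3_on_unit U U1 U2 U3.

(* U1 agrees with the (unique) derivative of U, hence is positive on [0, 1]. *)
Lemma U1_pos x : 0 <= x <= 1 -> 0 < U1 x.
Proof.
  intros Hx. destruct rise_derivative as [dU HdU].
  destruct (HdU x (proj1 Hx)) as [HdUx Hpos].
  assert (HdUx01 : D_in U dU unit_interval x).
  { apply (D_in_imp _ _ Defs.nonneg); [unfold Defs.nonneg, unit_interval; intros; lra|].
    exact HdUx. }
  destruct (HC x Hx) as [HU1 _].
  rewrite <- (single_limit _ _ _ _ _ (unit_interval_adherent x Hx) HdUx01 HU1).
  exact Hpos.
Qed.

(* By the intermediate value theorem, U maps [0, 1] onto [0, 1]. *)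
Lemma rise_onto y : 0 <= y <= 1 -> exists x, 0 <= x <= 1 /\ U x = y.
Proof.
  intros Hy. destruct HU as [_ [_ [_ [HU0 HU1]]]].
  destruct (Req_dec y 0) as [->|Hy0]; [exists 0; split; [lra | exact HU0]|].
  destruct (Req_dec y 1) as [->|Hy1]; [exists 1; split; [lra | exact HU1]|].
  destruct (IVT_interv (fun x => U (clamp 0 1 x) - y) 0 1) as [z [Hz Ez]].
  - intros a Ha. apply continuity_pt_minus; [| apply continuity_pt_const; intros ? ?; reflexivity].
    apply clamp_continuity; [lra | exact Ha|].
    destruct (HC a Ha) as [H _]. eapply cont_deriv; exact H.
  - lra.
  - rewrite clamp_id by lra. lra.
  - rewrite clamp_id by lra. lra.
  - exists z; split; [exact Hz|]. rewrite clamp_id in Ez by lra. lra.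
Qed.

Lemma Uinv_spec y : 0 <= y <= 1 -> 0 <= Uinv U y <= 1 /\ U (Uinv U y) = y.
Proof.
  intros Hy. destruct (rise_onto y Hy) as [x [Hx Ex]].
  assert (Hs : 0 <= Uinv U y /\ U (Uinv U y) = y).
  { unfold Uinv. apply epsilon_spec. exists x; split; [apply Hx | exact Ex]. }
  destruct Hs as [H0 HUy]. split; [|exact HUy].
  assert (Uinv U y <= x) by (apply rise_le_inv; lra).
  lra.
Qed.


Lemma Uinv_upper y e : 0 <= y <= 1 -> 0 < e ->
  exists del, 0 < del /\
    forall z, 0 <= z <= 1 -> z < y + del -> Uinv U z < Uinv U y + e.
Proof.
  intros Hy He. destruct (Uinv_spec y Hy) as [Hx0 Ex0].
  exists (U (Uinv U y + e) - y). split.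
  - assert (U (Uinv U y) < U (Uinv U y + e)) by (apply rise_increasing; lra). lra.
  - intros z Hz Hzy. destruct (Uinv_spec z Hz) as [Hxz Exz].
    destruct (Rlt_le_dec (Uinv U z) (Uinv U y + e)) as [|Hge]; [assumption|].
    assert (U (Uinv U y + e) <= U (Uinv U z)) by (apply rise_le; lra).
    lra.
Qed.

Lemma Uinv_lower y e : 0 <= y <= 1 -> 0 < e ->
  exists del, 0 < del /\
    forall z, 0 <= z <= 1 -> y - del < z -> Uinv U y - e < Uinv U z.
Proof.
  intros Hy He. destruct (Uinv_spec y Hy) as [Hx0 Ex0].
  destruct (Rlt_le_dec (Uinv U y - e) 0) as [Hneg|Hnn].
  - exists 1. split; [lra|]. intros z Hz _.
    destruct (Uinv_spec z Hz). lra.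
  - exists (y - U (Uinv U y - e)). split.
    + assert (U (Uinv U y - e) < U (Uinv U y)) by (apply rise_increasing; lra). lra.
    + intros z Hz Hzy. destruct (Uinv_spec z Hz) as [Hxz Exz].
      destruct (Rlt_le_dec (Uinv U y - e) (Uinv U z)) as [|Hle]; [assumption|].
      assert (U (Uinv U z) <= U (Uinv U y - e)) by (apply rise_le; lra).
      lra.
Qed.

Lemma Uinv_continuous y : 0 <= y <= 1 -> continue_in (Uinv U) unit_interval y.
Proof.
  intros Hy. unfold continue_in, limit1_in, limit_in. simpl. unfold Rdist.
  intros e He.
  destruct (Uinv_upper y e Hy He) as [d1 [Hd1 Hup]].
  destruct (Uinv_lower y e Hy He) as [d2 [Hd2 Hlow]].
  exists (Rmin d1 d2). split; [apply Rmin_pos; assumption|].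
  intros z [[Hz _] Hzy]. unfold unit_interval in Hz.
  apply Rabs_def2 in Hzy.
  pose proof (Rmin_l d1 d2). pose proof (Rmin_r d1 d2).
  specialize (Hup z Hz ltac:(lra)). specialize (Hlow z Hz ltac:(lra)).
  apply Rabs_def1; lra.
Qed.

(* Inverse function rule within [0, 1]: (U^-1)' = 1 / U'(U^-1). The difference
   quotient of U^-1 at y is the reciprocal of that of U at U^-1 y, composed
   with the continuous map U^-1. *)
Lemma Uinv_derivative y : 0 <= y <= 1 ->
  D_in (Uinv U) (fun z => / U1 (Uinv U z)) unit_interval y.
Proof.
  intros Hy. destruct (Uinv_spec y Hy) as [Hx0 Ex0].
  destruct (HC _ Hx0) as [HU1 _].
  assert (Hq := limit_comp (Uinv U) (fun w => (U w - U (Uinv U y)) / (w - Uinv U y))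
     (D_x unit_interval y) (D_x unit_interval (Uinv U y)) _ _ y (Uinv_continuous y Hy) HU1).
  apply limit_inv in Hq; [| apply Rgt_not_eq, U1_pos, Hx0].
  unfold D_in. apply (limit1_in_ext _ _ _ _ _ _ Hq).
  intros z [Hz Hzy]. unfold unit_interval in Hz.
  destruct (Uinv_spec z Hz) as [Hxz Exz].
  assert (Hne : Uinv U y <> Uinv U z).
  { intro E. apply Hzy. rewrite <- Ex0, <- Exz, E. reflexivity. }
  split.
  - split; [split; [exact Hz | exact Hzy] | split; [exact Hxz | exact Hne]].
  - simpl. rewrite Exz, Ex0. field. split; intro; apply Hzy; lra.
Qed.

(* The points q for which both q and U q + eps lie in [0, 1]: there H_eps is
   defined by the inverse on [0, 1] and is differentiable. *)
Definition slab (eps q : R) : Prop := 0 <= q <= 1 /\ 0 <= U q + eps <= 1.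

Lemma Heps_spec eps q : slab eps q ->
  0 <= Heps U eps q <= 1 /\ U (Heps U eps q) = U q + eps.
Proof. intros [_ Hq]. exact (Uinv_spec _ Hq). Qed.

Lemma Heps_ge eps q : 0 <= eps -> slab eps q -> q <= Heps U eps q.
Proof.
  intros He Hq. destruct (Heps_spec eps q Hq) as [Hh Eh].
  apply rise_le_inv; [apply Hq | apply Hh | lra].
Qed.

Lemma Heps_derivative eps p : slab eps p ->
  D_in (Heps U eps) (fun q => U1 q / U1 (Heps U eps q)) (slab eps) p.
Proof.
  intros Hp. destruct (HC p (proj1 Hp)) as [HU' _].
  assert (Hshift := Dadd _ _ _ _ _ p HU' (Dconst unit_interval eps p)).
  assert (Hcomp := Dcomp _ _ _ _ _ _ p Hshift (Uinv_derivative _ (proj2 Hp))).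
  apply (D_in_ext (fun q => (U1 q + 0) * / U1 (Uinv U (U q + eps))));
    [unfold Heps, Rdiv; ring | exact Hcomp].
Qed.

(* G eps q = U'(q) / U'(H_eps q) = H_eps' (q); the phi-derivative of Delta H
   is G eps (phi + dphi) - G eps phi. *)
Definition G (eps q : R) : R := U1 q / U1 (Heps U eps q).

(* The quantity whose monotonicity governs the sign of the derivative of G. *)
Definition kappa (x : R) : R := U2 x / (U1 x * U1 x).

Lemma G_derivative eps t : slab eps t ->
  D_in (G eps)
    (fun q => U1 q * U1 q / U1 (Heps U eps q) * (kappa q - kappa (Heps U eps q)))
    (slab eps) t.
Proof.
  intros Ht. destruct (Heps_spec eps t Ht) as [Hh _].
  assert (Hpos_t := U1_pos t (proj1 Ht)).
  assert (Hpos_h := U1_pos _ Hh).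
  assert (HU1 : D_in U1 U2 (slab eps) t).
  { apply (D_in_imp _ _ unit_interval); [intros y Hy; apply Hy|].
    apply (HC t (proj1 Ht)). }
  assert (HU1h : D_in (fun q => U1 (Heps U eps q))
                  (fun q => U1 q / U1 (Heps U eps q) * U2 (Heps U eps q)) (slab eps) t).
  { apply (D_in_imp _ _ (Dgf (slab eps) unit_interval (Heps U eps))).
    - intros y Hy. split; [exact Hy | apply (Heps_spec eps y Hy)].
    - exact (Dcomp _ _ _ _ _ _ t (Heps_derivative eps t Ht) (proj1 (proj2 (HC _ Hh)))). }
  assert (Hinv := D_in_Rinv _ _ _ _ HU1h ltac:(lra)).
  eapply D_in_ext; [| exact (Dmult _ _ _ _ _ _ HU1 Hinv)].
  simpl; unfold kappa. field. lra.
Qed.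

Lemma kappa_derivative x : 0 <= x <= 1 ->
  D_in kappa (fun t => (U3 t - 2 * U2 t ^ 2 / U1 t) / (U1 t * U1 t)) unit_interval x.
Proof.
  intros Hx. destruct (HC x Hx) as [_ [HU1 [HU2 _]]].
  assert (Hpos := U1_pos x Hx).
  assert (Hsq := Dmult _ _ _ _ _ _ HU1 HU1).
  assert (Hinv := D_in_Rinv _ _ _ _ Hsq ltac:(apply Rgt_not_eq, Rmult_lt_0_compat; lra)).
  eapply D_in_ext; [| exact (Dmult _ _ _ _ _ _ HU2 Hinv)].
  simpl; field. lra.
Qed.

Lemma kappa_monotone sg :
  (forall x, 0 <= x <= 1 -> sg * (U3 x - 2 * U2 x ^ 2 / U1 x) <= 0) ->
  forall x y, 0 <= x -> x <= y -> y <= 1 -> sg * kappa y <= sg * kappa x.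
Proof.
  intros Hsg x y Hx Hxy Hy.
  enough (- sg * kappa x <= - sg * kappa y) by lra.
  apply (D_in_nondecreasing (fun t => - sg * kappa t)
          (fun t => - sg * ((U3 t - 2 * U2 t ^ 2 / U1 t) / (U1 t * U1 t)))); [exact Hxy | |].
  - intros t Ht. apply Dmult_const.
    apply (D_in_imp _ _ unit_interval); [unfold unit_interval; intros; lra|].
    apply kappa_derivative; lra.
  - intros t Ht. assert (Ht01 : 0 <= t <= 1) by lra.
    assert (Hpos := U1_pos t Ht01). specialize (Hsg t Ht01).
    replace (- sg * ((U3 t - 2 * U2 t ^ 2 / U1 t) / (U1 t * U1 t)))
      with (- (sg * (U3 t - 2 * U2 t ^ 2 / U1 t)) / (U1 t * U1 t)) by (field; lra).
    apply Rle_mult_inv_pos; [lra | apply Rmult_lt_0_compat; lra].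
Qed.

(* If sg * kappa is nonincreasing on [0, 1], then sg * G eps is nondecreasing
   on every interval [a, b] of the slab: since q <= H_eps q, the sign of G'
   is that of sg * (kappa q - kappa (H_eps q)) >= 0. *)
Lemma G_monotone sg eps :
  (forall x y, 0 <= x -> x <= y -> y <= 1 -> sg * kappa y <= sg * kappa x) ->
  0 <= eps -> forall a b, 0 <= a -> a <= b -> b <= 1 -> U b + eps <= 1 ->
  sg * G eps a <= sg * G eps b.
Proof.
  intros Hk He a b Ha Hab Hb Hbe.
  assert (Hslab : forall t, a <= t <= b -> slab eps t).
  { intros t Ht. destruct HU as [_ [Hnn _]].
    assert (0 <= U t) by (apply Hnn; lra).
    assert (U t <= U b) by (apply rise_le; lra).
    split; lra. }
  apply (D_in_nondecreasing (fun t => sg * G eps t)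
          (fun q => sg * (U1 q * U1 q / U1 (Heps U eps q) * (kappa q - kappa (Heps U eps q)))));
    [exact Hab | |].
  - intros t Ht. apply Dmult_const.
    apply (D_in_imp _ _ (slab eps)); [intros y Hy; apply Hslab, Hy|].
    apply G_derivative, Hslab, Ht.
  - intros t Ht. specialize (Hslab t Ht).
    destruct (Heps_spec eps t Hslab) as [Hh Eh].
    assert (Hpos_t := U1_pos t (proj1 Hslab)).
    assert (Hpos_h := U1_pos _ Hh).
    assert (Hth := Heps_ge eps t He Hslab).
    assert (Hkk := Hk t (Heps U eps t) ltac:(lra) Hth ltac:(lra)).
    replace (sg * (U1 t * U1 t / U1 (Heps U eps t) * (kappa t - kappa (Heps U eps t))))
      with (U1 t * U1 t / U1 (Heps U eps t) * (sg * kappa t - sg * kappa (Heps U eps t)))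
      by ring.
    apply Rmult_le_pos; [| lra].
    apply Rle_mult_inv_pos; [apply Rmult_le_pos | ]; lra.
Qed.

Lemma inD_slab p dphi eps : inD U p dphi eps ->
  0 <= eps /\ slab eps p /\ slab eps (p + dphi).
Proof.
  intros [He [Hp Hd]].
  destruct (Uinv_spec (1 - eps) ltac:(lra)) as [Hb Eb].
  destruct HU as [_ [Hnn _]].
  assert (U (p + dphi) <= U (Uinv U (1 - eps))) by (apply rise_le; lra).
  assert (U p <= U (p + dphi)) by (apply rise_le; lra).
  assert (0 <= U p) by (apply Hnn; lra).
  unfold slab; repeat split; lra.
Qed.

Lemma DeltaH_derivative phi dphi eps : inD U phi dphi eps ->
  D_in (fun p => DeltaH U p dphi eps) (fun _ => G eps (phi + dphi) - G eps phi)
       (fun p => inD U p dphi eps) phi.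
Proof.
  intros HD. destruct (inD_slab phi dphi eps HD) as [_ [Hs0 Hs1]].
  assert (Hshift := Dadd no_cond _ _ _ _ phi (Dx _ phi) (Dconst _ dphi phi)).
  assert (Hright := Dcomp _ _ _ _ _ _ phi Hshift (Heps_derivative eps _ Hs1)).
  assert (Hleft := Heps_derivative eps _ Hs0).
  apply (D_in_imp _ _ _ (fun p => inD U p dphi eps)) in Hleft;
    [| intros y Hy; apply (inD_slab y dphi eps Hy)].
  apply (D_in_imp _ _ _ (fun p => inD U p dphi eps)) in Hright;
    [| intros y Hy; split; [exact I | apply (inD_slab y dphi eps Hy)]].
  eapply D_in_ext; [| exact (Dminus _ _ _ _ _ _ Hright Hleft)].
  simpl; unfold G. ring.
Qed.

Lemma DeltaH_derivative_sign sg :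
  (forall x y, 0 <= x -> x <= y -> y <= 1 -> sg * kappa y <= sg * kappa x) ->
  forall phi dphi eps, inD U phi dphi eps ->
    exists l, D_in (fun p => DeltaH U p dphi eps) (fun _ => l)
                   (fun p => inD U p dphi eps) phi /\ 0 <= sg * l.
Proof.
  intros Hk phi dphi eps HD.
  exists (G eps (phi + dphi) - G eps phi).
  split; [exact (DeltaH_derivative phi dphi eps HD)|].
  destruct (inD_slab phi dphi eps HD) as [He [Hs0 Hs1]].
  assert (Hdphi : 0 <= dphi) by apply HD.
  assert (Hmono := G_monotone sg eps Hk He phi (phi + dphi)
                     ltac:(apply Hs0) ltac:(lra) ltac:(apply Hs1) ltac:(apply Hs1)).
  lra.
Qed.

Lemma icpd_of_bound :
  (forall x, 0 <= x <= 1 -> U3 x <= 2 * U2 x ^ 2 / U1 x) -> icpd U.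
Proof.
  intros Hb phi dphi eps HD.
  assert (Hk := kappa_monotone 1 ltac:(intros x Hx; specialize (Hb x Hx); lra)).
  destruct (DeltaH_derivative_sign 1 Hk phi dphi eps HD) as [l [Hl Hsg]].
  exists l; split; [exact Hl | lra].
Qed.

Lemma dcpd_of_bound :
  (forall x, 0 <= x <= 1 -> 2 * U2 x ^ 2 / U1 x <= U3 x) -> dcpd U.
Proof.
  intros Hb phi dphi eps HD.
  assert (Hk := kappa_monotone (-1) ltac:(intros x Hx; specialize (Hb x Hx); lra)).
  destruct (DeltaH_derivative_sign (-1) Hk phi dphi eps HD) as [l [Hl Hsg]].
  exists l; split; [exact Hl | lra].
Qed.

(* On the diagonal psi = phi, the bound of the general criterion is 2 U''^2/U'. *)
Lemma diagonal_bound x : 0 <= x <= 1 ->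
  3 * U2 x ^ 2 / U1 x - U2 x * U2 x * U1 x / U1 x ^ 2 = 2 * U2 x ^ 2 / U1 x.
Proof. intros Hx. assert (Hpos := U1_pos x Hx). field. lra. Qed.

End RiseFunction.

Theorem mainTheorem12 (U U1 U2 U3 : R -> R) :
  rise_function U ->
  C3_on_unit U U1 U2 U3 ->
  ((forall phi, 0 <= phi <= 1 ->
      U2 phi <= 0 /\ U3 phi <= 2 * U2 phi ^ 2 / U1 phi) -> icpd U) /\
  ((forall phi, 0 <= phi <= 1 ->
      0 <= U2 phi /\ 2 * U2 phi ^ 2 / U1 phi <= U3 phi) -> dcpd U) /\
  ((forall psi phi, 0 <= psi -> psi <= phi -> phi <= 1 ->
      U3 phi <= 3 * U2 phi ^ 2 / U1 phi
                - U2 psi * U2 phi * U1 phi / U1 psi ^ 2) -> icpd U) /\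
  ((forall psi phi, 0 <= psi -> psi <= phi -> phi <= 1 ->
      3 * U2 phi ^ 2 / U1 phi
        - U2 psi * U2 phi * U1 phi / U1 psi ^ 2 <= U3 phi) -> dcpd U).
Proof.
  intros HU HC.
  split; [|split; [|split]]; intros H.
  - apply (icpd_of_bound U HU U1 U2 U3 HC). intros x Hx. apply H, Hx.
  - apply (dcpd_of_bound U HU U1 U2 U3 HC). intros x Hx. apply H, Hx.
  - apply (icpd_of_bound U HU U1 U2 U3 HC). intros x Hx.
    rewrite <- (diagonal_bound U HU U1 U2 U3 HC x Hx).
    apply H; lra.
  - apply (dcpd_of_bound U HU U1 U2 U3 HC). intros x Hx.
    rewrite <- (diagonal_bound U HU U1 U2 U3 HC x Hx).
    apply H; lra.
Qed.
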